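(* Let $\mathcal{T}_0$ be the caterpillar tree with $n\ge 3$ leaves labelled $1,\dots,n$ in order along its spine, and let $P_{\mathcal{T}_0}$ be as in the context. The minimal generators of $P_{\mathcal{T}_0}$ are exactly the elements $w_{i,j,k}$, $1\le i<j<k\le n$, where $w_{i,j,k}$ is the minimal generator of $P_{\mathcal{T}_0}$ whose support is the subtree spanned by the leaves $i,j,k$. Moreover, the kernel $I_{\mathcal{T}_0}$ of the surjection $\mathbb{C}[w_{i,j,k}: i<j<k]\to\mathbb{C}[P_{\mathcal{T}_0}]$ equals the ideal $J_{3,n}$ generated by all binomials $w_{i,j,k}w_{r,s,t}-w_{(i,j,k)\wedge(r,s,t)}\,w_{(i,j,k)\vee(r,s,t)}$, where $(i,j,k)\wedge(r,s,t)=(\min(i,r),\min(j,s),\min(k,t))$ and $(i,j,k)\vee(r,s,t)=(\max(i,r),\max(j,s),\max(k,t))$.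
   Context: A Berenstein–Zelevinsky (BZ) triangle for $sl_3(\mathbb{C})$ is a $9$-tuple of nonnegative integers $(a,b,c,d,e,f,g,h,i)$ placed on the vertices of a triangular diagram with rows $a$; $b\ c$; $d\ e$; $f\ g\ h\ i$; the sides, oriented counterclockwise, read side 1 $=(a,b,d,f)$, side 2 $=(f,g,h,i)$, side 3 $=(i,e,c,a)$; the entries satisfy $b+c=g+h$, $c+e=d+g$, $e+h=b+d$. The boundary weight of a side $(x_1,x_2,x_3,x_4)$ is $(x_1+x_2)\omega_1+(x_3+x_4)\omega_2$ ($\omega_1,\omega_2$ the fundamental weights of $sl_3(\mathbb{C})$), identified with $(x_1+x_2,x_3+x_4)$. For a tree $\mathcal{T}$ whose non-leaf vertices have degree $3$ and leaves labelled $1,\dots,n$, attach a BZ triangle to each non-leaf vertex with a fixed bijection between its sides (counterclockwise) and the incident edges. $Q_{\mathcal{T}}(sl_3(\mathbb{C}))$ is the semigroup (entrywise addition) of such assignments such that for each edge joining non-leaf vertices $v,v'$, if $v$'s side on it has boundary weight $(p,q)$ then $v'$'s side on it has $(q,p)$; $\pi_{\mathcal{T}}(w)$ records at each leaf the boundary weight on its leaf edge; the support of $w$ is the set of edges with nonzero boundary weight. $P_{\mathcal{T}}$ is the subsemigroup of $w$ with every component of $\pi_{\mathcal{T}}(w)$ a nonnegative multiple of $\omega_1$. The caterpillar tree $\mathcal{T}_0$ has non-leaf vertices $v_1,\dots,v_{n-2}$ forming a path (the spine), with leaves $1,2$ attached to $v_1$, leaf $i$ attached to $v_{i-1}$ for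 $3\le i\le n-2$, and leaves $n-1,n$ attached to $v_{n-2}$. *)

From HB Require Import structures.
From mathcomp Require Import all_boot all_order all_algebra all_field.
From mathcomp Require Import mpoly.
Set Implicit Arguments. Unset Strict Implicit. Unset Printing Implicit Defensive.
Import GRing.Theory.

(* Conventions (0-indexed internally): the leaf labelled l+1 in the paper is *)
(* leaf l here (l < n); the spine vertex v_(m+1) of the paper is vertex m    *)
(* here (m < n-2); the spine edge joining v_(m+1) and v_(m+2) is inner edge  *)
(* m here (m < n-3).                                                         *)

(* An assignment of a 9-tuple of naturals (a,b,c,d,e,f,g,h,i) to every      *)
(* non-leaf vertex of the caterpillar T0; entry 0..8 = a..i.                 *)
Definition assign (n : nat) := {ffun 'I_(n - 2) * 'I_9 -> nat}.

Definition asg0 n : assign n := [ffun _ => 0%N].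
Definition asg_add n (u v : assign n) : assign n := [ffun x => (u x + v x)%N].

(* entry k (0..8) of the triangle at vertex m; 0 out of range *)
Definition ent n (w : assign n) (m k : nat) : nat :=
  if insub m is Some m' then w (m', inord k) else 0%N.

Definition BZ_at n (w : assign n) (m : nat) : Prop :=
  let a := ent w m 0 in let b := ent w m 1 in let c := ent w m 2 in
  let d := ent w m 3 in let e := ent w m 4 in let f := ent w m 5 in
  let g := ent w m 6 in let h := ent w m 7 in let i := ent w m 8 in
  [/\ (b + c = g + h)%N, (c + e = d + g)%N & (e + h = b + d)%N].

Definition side_wt n (w : assign n) (m s : nat) : nat * nat :=
  let a := ent w m 0 in let b := ent w m 1 in let c := ent w m 2 in
  let d := ent w m 3 in let e := ent w m 4 in let f := ent w m 5 in
  let g := ent w m 6 in let h := ent w m 7 in let i := ent w m 8 in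
  if s == 1%N then (a + b, d + f)%N
  else if s == 2%N then (f + g, h + i)%N
  else (i + e, c + a)%N.

(* Leaf l is attached to vertex
   leaf_vert n l; its edge is side leaf_side n l of that vertex
   (counterclockwise order of sides at each vertex: at v_1 = (leaf 1, leaf 2,
   spine edge to v_2); at an inner v_m = (spine edge to v_(m-1), leaf m+1,
   spine edge to v_(m+1)); at v_(n-2) = (spine edge to v_(n-3), leaf n-1,
   leaf n); for n = 3 the unique vertex has sides (leaf 1, leaf 2, leaf 3)).
   Inner edge m joins side 3 of vertex m to side 1 of vertex m+1. *)
Definition leaf_vert (n l : nat) : nat :=
  if (l <= 1)%N then 0%N else if (n - 2 <= l)%N then (n - 3)%N else l.-1.
Definition leaf_side (n l : nat) : nat :=
  if l == 0%N then 1%N else if l == n.-1 then 3%N else 2%N.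

(* boundary weight on the leaf edge of leaf l (this is pi_T0(w) at l) *)
Definition leaf_wt n (w : assign n) (l : nat) : nat * nat :=
  side_wt w (leaf_vert n l) (leaf_side n l).
Definition inner_wt n (w : assign n) (m : nat) : nat * nat := side_wt w m 3.

Definition swap (p : nat * nat) : nat * nat := (p.2, p.1).

Definition inQ n (w : assign n) : Prop :=
  (forall m, (m < n - 2)%N -> BZ_at w m) /\
  (forall m, (m < n - 3)%N -> side_wt w m 3 = swap (side_wt w m.+1 1)).

(* P_T0: every leaf weight is a nonnegative multiple of omega_1 *)
Definition inP n (w : assign n) : Prop :=
  inQ w /\ forall l, (l < n)%N -> (leaf_wt w l).2 = 0%N.

Definition min_gen n (w : assign n) : Prop :=
  [/\ inP w, w <> asg0 n &
      forall u v, inP u -> inP v -> w = asg_add u v -> u = asg0 n \/ v = asg0 n].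

Definition triple n := {t : 'I_n * 'I_n * 'I_n | (t.1.1 < t.1.2 < t.2)%N}.
HB.instance Definition _ n := Finite.on (triple n).

(* inner edge m separates leaves a and b: removing it splits the vertices
   into those <= m and those > m *)
Definition separates n (m a b : nat) : bool :=
  (leaf_vert n a <= m)%N != (leaf_vert n b <= m)%N.

(* the support of w equals the subtree of T0 spanned by leaves i, j, k:
   a leaf edge is in that subtree iff its leaf is among i, j, k; an inner
   edge is in it iff it separates two of i, j, k *)
Definition support_is_span n (w : assign n) (i j k : nat) : Prop :=
  (forall l, (l < n)%N -> (leaf_wt w l != (0, 0)%N) = [|| l == i, l == j | l == k]) /\
  (forall m, (m < n - 3)%N ->
     (inner_wt w m != (0, 0)%N) = [|| separates n m i j, separates n m j k | separates n m i k]).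

(* Polynomial rings.  C[w_{ijk}] has one variable per increasing triple     *)
(* (indexed through enum_val); C[P_T0] is realised inside the polynomial    *)
(* ring C[y_x : x vertex-entry slot] as the span of the monomials y^w,      *)
(* w in P_T0, and the surjection sends w_t to y^(w_t).                      *)
Definition nvars n := #|{: triple n}|.
Definition nslots n := #|{: 'I_(n - 2) * 'I_9}|.

Definition monom n (w : assign n) : 'X_{1..nslots n} :=
  [multinom w (enum_val i) | i < nslots n].

Definition var n (t : triple n) : {mpoly algC[nvars n]} := 'X_(enum_rank t).

Definition phi n (wf : triple n -> assign n) (p : {mpoly algC[nvars n]})
  : {mpoly algC[nslots n]} :=
  p \mPo [tuple 'X_[monom (wf (enum_val i))] | i < nvars n].

Definition kerI n (wf : triple n -> assign n) (p : {mpoly algC[nvars n]}) : Prop :=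
  phi wf p = 0%R.

Definition ideal_gen (R : comNzRingType) (S : R -> Prop) (f : R) : Prop :=
  exists s : seq (R * R), (forall q, q \in s -> S q.2) /\
    f = (\sum_(q <- s) q.1 * q.2)%R.

Definition binom n (f : {mpoly algC[nvars n]}) : Prop :=
  exists t u v x : triple n,
    [/\ (val v).1.1 = minn (val t).1.1 (val u).1.1 :> nat,
        (val v).1.2 = minn (val t).1.2 (val u).1.2 :> nat &
        (val v).2 = minn (val t).2 (val u).2 :> nat] /\
    [/\ (val x).1.1 = maxn (val t).1.1 (val u).1.1 :> nat,
        (val x).1.2 = maxn (val t).1.2 (val u).1.2 :> nat &
        (val x).2 = maxn (val t).2 (val u).2 :> nat] /\
    f = (var t * var u - var v * var x)%R.

Definition J3n n (f : {mpoly algC[nvars n]}) : Prop := ideal_gen (@binom n) f.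

Definition tri1 n (t : triple n) : nat := (val t).1.1.
Definition tri2 n (t : triple n) : nat := (val t).1.2.
Definition tri3 n (t : triple n) : nat := (val t).2.
Definition supp_span n (w : assign n) (t : triple n) : Prop :=
  support_is_span w (tri1 t) (tri2 t) (tri3 t).

From HB Require Import structures.
From mathcomp Require Import all_boot all_order all_algebra all_field.
From mathcomp Require Import mpoly zify ring.
Set Implicit Arguments. Unset Strict Implicit. Unset Printing Implicit Defensive.
Import GRing.Theory.

(* Reading the entries [c], [b], [f] along the spine turns an element of P_T0
   into three leaf-indexed "rows" al, be, ga.  The BZ, matching and leaf
   conditions force the remaining entries to be differences of prefix sums of
   the rows, so an element is determined by its rows, and the possible rows are
   exactly the ballot triples: sum_(y <= l+1) be y <= sum_(y <= l) al y and
   sum_(y <= l+1) ga y <= sum_(y <= l) be y, with equal totals -- the row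
   contents of a three-row rectangular tableau.  Peeling off the column
   (i, j, k) of first positive positions writes every ballot triple as a sum of
   columns i < j < k, whose elements of P_T0 are the w_ijk; all decompositions
   of an element have the same length, so the w_ijk are exactly the
   irreducibles.  Two decompositions of the same element can both be
   straightened by Hibi exchanges w_t w_u ~> w_(t /\ u) w_(t \/ u) to begin with
   the meet of all their columns, which depends only on the element; by
   induction on the length, equal sums give monomials congruent modulo J_3n,
   and a polynomial in the kernel is a combination of such differences. *)

Definition psum (f : nat -> nat) (l : nat) : nat := \sum_(y < l.+1) f y.

Definition delta (c l : nat) : nat := c == l.

Definition leads (f g : nat -> nat) : Prop := forall l, psum g l.+1 <= psum f l.

Section PrefixSums.

Implicit Types (f g : nat -> nat) (c i j k l m : nat).

Lemma psum0 f : psum f 0 = f 0.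
Proof. by rewrite /psum big_ord_recr big_ord0. Qed.

Lemma psumS f l : psum f l.+1 = psum f l + f l.+1.
Proof. by rewrite /psum big_ord_recr. Qed.

Lemma eq_psum f g l : f =1 g -> psum f l = psum g l.
Proof. by move=> fg; apply: eq_bigr => y _. Qed.

Lemma psumD f g l : psum (fun y => f y + g y) l = psum f l + psum g l.
Proof. exact: big_split. Qed.

Lemma leq_psum f l m : l <= m -> psum f l <= psum f m.
Proof.
move=> /subnKC <-; elim: (m - l) => [|k IH]; first by rewrite addn0.
by rewrite addnS psumS (leq_trans IH) ?leq_addr.
Qed.

Lemma leq_term_psum f l : f l <= psum f l.
Proof. by case: l => [|l]; rewrite ?psum0 ?psumS ?leq_addl. Qed.

Lemma psum_eq0P f l : psum f l = 0 <-> forall y, y <= l -> f y = 0.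
Proof.
split=> [f0 y le_yl | f0]; first by have := leq_term_psum f y; have := leq_psum f le_yl; lia.
elim: l f0 => [|l IH] f0; first by rewrite psum0 f0.
by rewrite psumS IH ?f0 // => y le_yl; apply: f0; lia.
Qed.

Lemma psum_gt0_first f l : 0 < psum f l ->
  exists2 i, 0 < f i & forall y, 0 < f y -> i <= y.
Proof.
move=> pos; have ex_pos : exists y, 0 < f y.
  elim: l pos => [|l IH]; first by rewrite psum0; exists 0.
  by rewrite psumS; case: (posnP (f l.+1)) => [->|]; [rewrite addn0|exists l.+1].
by case: (ex_minnP ex_pos) => i; exists i.
Qed.

Lemma psum_stable f k l : (forall y, k < y -> f y = 0) -> k <= l -> psum f l = psum f k.
Proof.
move=> f0 /subnKC <-; elim: (l - k) => [|i IH]; first by rewrite addn0.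
by rewrite addnS psumS IH f0 ?addn0 //; lia.
Qed.

Lemma psum_delta c l : psum (delta c) l = (c <= l).
Proof.
elim: l => [|l IH]; first by rewrite psum0; case: c.
by rewrite psumS IH /delta; case: (ltngtP c l.+1) => H; rewrite ?H /=; lia.
Qed.

Lemma psum_subdelta f c l : 0 < f c ->
  psum (fun y => f y - delta c y) l = psum f l - (c <= l).
Proof.
move=> fc_gt0; rewrite -psum_delta (@eq_psum f (fun y => f y - delta c y + delta c y)).
  by rewrite psumD addnK.
by move=> y; rewrite /delta; case: eqP => [<-|]; lia.
Qed.

Lemma leads_first_lt f g i j :
  leads f g -> g 0 = 0 -> 0 < g j -> (forall y, 0 < f y -> i <= y) -> i < j.
Proof.
move=> fg g0 gj_gt0 i_min; rewrite ltnNge; apply/negP => le_ji.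
have j_gt0 : 0 < j by case: j gj_gt0 {le_ji} => //; rewrite g0.
have f0 : psum f j.-1 = 0.
  apply/psum_eq0P => y le_y; case: (posnP (f y)) => // /i_min; lia.
have := fg j.-1; rewrite prednK // f0; have := leq_term_psum g j; lia.
Qed.

(* Before [j] the prefix sums of [g] vanish, by minimality of [j]. *)
Lemma leads_subdelta f g i j :
  leads f g -> 0 < f i -> 0 < g j -> i < j -> (forall y, 0 < g y -> j <= y) ->
  leads (fun y => f y - delta i y) (fun y => g y - delta j y).
Proof.
move=> fg fi_gt0 gj_gt0 lt_ij j_min l; rewrite !psum_subdelta //; have := fg l.
case: (leqP j l.+1) => jl; first by rewrite (_ : i <= l); lia.
suff -> : psum g l.+1 = 0 by [].
by apply/psum_eq0P => y le_y; case: (posnP (g y)) => // /j_min; lia.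
Qed.

End PrefixSums.

Section IdealGen.

Variables (R : comNzRingType) (S : R -> Prop).
Local Open Scope ring_scope.

Lemma ideal_gen_mem a : S a -> ideal_gen S a.
Proof.
by move=> Sa; exists [:: (1, a)]; split=> [q|]; [rewrite inE => /eqP-> | rewrite big_seq1 mul1r].
Qed.

Lemma ideal_gen0 : ideal_gen S 0.
Proof. by exists [::]; rewrite big_nil. Qed.

Lemma ideal_genD a b : ideal_gen S a -> ideal_gen S b -> ideal_gen S (a + b).
Proof.
move=> [s [Ss ->]] [s' [Ss' ->]]; exists (s ++ s'); split; last by rewrite big_cat.
by move=> q; rewrite mem_cat => /orP[/Ss|/Ss'].
Qed.

Lemma ideal_genMl r a : ideal_gen S a -> ideal_gen S (r * a).
Proof.
move=> [s [Ss ->]]; exists [seq (r * q.1, q.2) | q <- s]; split.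
  by move=> q /mapP[q' /Ss Sq' ->].
by rewrite big_map mulr_sumr; apply: eq_bigr => q _; rewrite mulrA.
Qed.

Lemma ideal_genB a b : ideal_gen S a -> ideal_gen S b -> ideal_gen S (a - b).
Proof. by move=> Sa Sb; rewrite -mulN1r; apply: ideal_genD Sa (ideal_genMl _ Sb). Qed.

Lemma ideal_gen_sum (I : eqType) (r : seq I) (F : I -> R) :
  (forall i, i \in r -> ideal_gen S (F i)) -> ideal_gen S (\sum_(i <- r) F i).
Proof.
elim: r => [|i r IH] SF; first by rewrite big_nil; apply: ideal_gen0.
by rewrite big_cons; apply: ideal_genD; [apply: SF; rewrite inE eqxx | apply: IH => j rj;
  apply: SF; rewrite inE rj orbT].
Qed.

End IdealGen.

Section MonomialKernel.

Variables (R : comNzRingType) (k l : nat) (S : {mpoly R[k]} -> Prop).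
Variables (phi : {linear {mpoly R[k]} -> {mpoly R[l]}}) (g : 'X_{1..k} -> 'X_{1..l}).
Hypothesis phiX : forall m, phi 'X_[m] = 'X_[g m].
Hypothesis fiber_binomial : forall m m', g m = g m' -> ideal_gen S ('X_[m] - 'X_[m']).
Local Open Scope ring_scope.

(* Replace every monomial of [p] by a fixed representative of its fiber under
   [g]; the difference lies in the ideal and the result has the coefficients of
   [phi p], so it vanishes when [phi p] does. *)
Lemma ideal_gen_kernel p : phi p = 0 -> ideal_gen S p.
Proof.
move=> phi_p; pose rep e := nth 0%MM (msupp p) (find (fun m => g m == e) (msupp p)).
have repP m : m \in msupp p -> g (rep (g m)) = g m.
  by move=> supp_m; apply/eqP/(nth_find 0%MM (a := fun m' => g m' == g m))/hasP; exists m.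
pose N := \sum_(m <- msupp p) p@_m *: 'X_[rep (g m)].
suff N0 : N = 0.
  rewrite -[p]subr0 -N0 {1}(mpolyE p) -sumrB; apply: ideal_gen_sum => m supp_m.
  by rewrite -scalerBr -mul_mpolyC; apply/ideal_genMl/fiber_binomial; rewrite repP.
apply/mpolyP => mu; rewrite mcoeff0 /N raddf_sum /=.
under eq_bigr do rewrite mcoeffZ mcoeffX.
have := congr1 (mcoeff (g mu)) phi_p; rewrite {1}(mpolyE p) linear_sum raddf_sum mcoeff0 /=.
under eq_bigr do rewrite linearZ phiX mcoeffZ mcoeffX.
have [rep_mu|rep_mu] := eqVneq (rep (g mu)) mu.
  move=> H0; apply: etrans H0; apply: eq_big_seq => m supp_m; congr (_ * _%:R).
  congr nat_of_bool; apply/idP/idP => /eqP E; apply/eqP; first by rewrite -E repP.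
  by rewrite E rep_mu.
move=> _; apply: big1_seq => m /andP[_ supp_m]; case: eqP => [E|]; last by rewrite mulr0.
by move: rep_mu; rewrite -E repP ?eqxx.
Qed.

End MonomialKernel.

HB.instance Definition _ n (wf : triple n -> assign n) := GRing.LRMorphism.copy (phi wf)
  (comp_mpoly [tuple 'X_[monom (wf (enum_val i))] | i < nvars n]).

Section Caterpillar.

Variable n : nat.
Hypothesis hn : 3 <= n.

Implicit Types (x : assign n) (al be ga : nat -> nat).

Lemma ent_out x m k : n - 2 <= m -> ent x m k = 0.
Proof. by move=> H; rewrite /ent insubF // ltnNge H. Qed.

Lemma entD x y m k : ent (x + y)%R m k = ent x m k + ent y m k.
Proof. by rewrite /ent; case: insubP => // m' _ _; rewrite ffunE. Qed.

Lemma ent0 m k : ent (0 : assign n)%R m k = 0.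
Proof. by rewrite /ent; case: insubP => // m' _ _; rewrite ffunE. Qed.

Lemma assignP x y :
  (forall m k, m < n - 2 -> k < 9 -> ent x m k = ent y m k) -> x = y.
Proof.
move=> xy; apply/ffunP => [[m k]].
by have := xy m k (ltn_ord m) (ltn_ord k); rewrite /ent valK inord_val.
Qed.

Lemma leaf_wtE x l : l < n ->
  leaf_wt x l = if l == 0 then side_wt x 0 1 else if l == n.-1 then side_wt x (n - 3) 3
                else side_wt x l.-1 2.
Proof.
move=> ltln; rewrite /leaf_wt /leaf_vert /leaf_side.
have [->|l0] := eqVneq l 0; first by [].
have [->|ln] := eqVneq l n.-1; first by rewrite ifF ?ifT //; lia.
case: (leqP l 1) => [le_l1|_]; first by have -> : l = 1 by lia.
by case: ifP => // le_l; congr side_wt; lia.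
Qed.

(* The element of [P] with row contents [al], [be], [ga]: at vertex [m] the
   entries [c, b, f] are [al], [be], [ga] at the leaf [m.+1], the entries [a]
   and [d] are the ballot differences, [e] and [g] are forced by the BZ
   equations and [h = i = 0]. *)
Definition bz_entry al be ga (m k : nat) : nat :=
  match k with
  | 0 => psum al m - psum be m.+1
  | 1 => be m.+1
  | 2 => al m.+1
  | 3 => psum be m - psum ga m.+1
  | 4 => be m.+1 + (psum be m - psum ga m.+1)
  | 5 => ga m.+1
  | 6 => be m.+1 + al m.+1
  | _ => 0
  end.

Definition of_rows al be ga : assign n :=
  [ffun p => bz_entry al be ga (val p.1) (val p.2)].

Definition ballot al be ga : Prop :=
  [/\ forall l, n <= l -> [/\ al l = 0, be l = 0 & ga l = 0],
      be 0 = 0 /\ ga 0 = 0, leads al be, leads be ga &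
      psum al n.-1 = psum be n.-1 /\ psum be n.-1 = psum ga n.-1].

Lemma ent_of_rows al be ga m k : k < 9 ->
  ent (of_rows al be ga) m k = if m < n - 2 then bz_entry al be ga m k else 0.
Proof.
move=> ltk9; rewrite /ent; case: insubP => [m' lt_m <-|/negbTE-> //].
by rewrite ffunE /= inordK // ltn_ord.
Qed.

Lemma eq_of_rows al be ga al' be' ga' :
  al =1 al' -> be =1 be' -> ga =1 ga' -> of_rows al be ga = of_rows al' be' ga'.
Proof.
move=> Ea Eb Eg; apply: assignP => m k lt_m lt_k; rewrite !ent_of_rows // lt_m /bz_entry.
by rewrite (eq_psum _ Ea) (eq_psum m Eb) (eq_psum m.+1 Eb) (eq_psum _ Eg) Ea Eb Eg.
Qed.

Lemma inP_of_rows al be ga : ballot al be ga -> inP (of_rows al be ga).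
Proof.
move=> [_ [be0 ga0] ab bg [tot_ab tot_bg]]; split; first split.
- by move=> m lt_m; rewrite /BZ_at !ent_of_rows // lt_m /=; split; lia.
- move=> m lt_m; have lt_m2 : m < n - 2 by lia.
  have lt_m3 : m.+1 < n - 2 by lia.
  rewrite /side_wt /= !ent_of_rows // lt_m2 lt_m3 /swap /=.
  move: (ab m) (ab m.+1) (bg m) (bg m.+1); rewrite !psumS; clear.
  by move=> *; congr pair; lia.
- move=> l lt_l; rewrite leaf_wtE //.
  have [_|l0] := eqVneq l 0.
    rewrite /side_wt /= !ent_of_rows // (_ : 0 < n - 2) /=; last lia.
    by have := bg 0; rewrite /= !psumS !psum0 be0 ga0; lia.
  have [_|ln] := eqVneq l n.-1; last by rewrite /side_wt /= !ent_of_rows //; case: ifP.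
  rewrite /side_wt /= !ent_of_rows // (_ : n - 3 < n - 2) /=; last lia.
  move: tot_ab tot_bg (ab (n - 3)) (ab (n - 2)) (bg (n - 2)).
  rewrite (_ : n.-1 = (n - 3).+2); last lia.
  rewrite (_ : n - 2 = (n - 3).+1); last lia.
  by move: (n - 3) => k; rewrite !psumS; clear; lia.
Qed.

(* The [omega_1]-weight of leaf [l] splits as [row1 x l + row2 x l + row3 x l];
   for an inner leaf these are the entries [c], [b], [f] of its vertex. *)
Definition row1 x l := if l == 0 then ent x 0 0 + ent x 0 1 else ent x l.-1 2.
Definition row2 x l := if l == 0 then 0 else ent x l.-1 1.
Definition row3 x l :=
  if l == 0 then 0 else if l == n.-1 then ent x (n - 3) 1 + ent x (n - 3) 3 else ent x l.-1 5.

Lemma row1S x l : row1 x l.+1 = ent x l 2. Proof. by []. Qed.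
Lemma row2S x l : row2 x l.+1 = ent x l 1. Proof. by []. Qed.
Lemma row3S x l : l.+1 != n.-1 -> row3 x l.+1 = ent x l 5.
Proof. by rewrite /row3 => /negbTE->. Qed.
Lemma row3_last x : row3 x n.-1 = ent x (n - 3) 1 + ent x (n - 3) 3.
Proof. by rewrite /row3 eqxx ifF //; lia. Qed.

Lemma inP_vertex x m : inP x -> m < n - 2 ->
  [/\ ent x m 7 = 0, ent x m 8 = 0, ent x m 1 + ent x m 2 = ent x m 6 &
      ent x m 4 = ent x m 1 + ent x m 3].
Proof.
move=> [[bz _] leaf] lt_m; have lt_m1 : m.+1 < n by lia.
have := leaf _ lt_m1; rewrite leaf_wtE // (_ : (m.+1 == n.-1) = false) /side_wt /=; last lia.
by case: (bz m lt_m) => /= *; split; lia.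
Qed.

Lemma inP_first x : inP x -> ent x 0 3 = 0 /\ ent x 0 5 = 0.
Proof.
move=> [_ leaf]; have := leaf 0 (ltnW (ltnW hn)).
by rewrite leaf_wtE /side_wt /=; lia.
Qed.

Lemma inP_last x : inP x -> ent x (n - 3) 2 = 0 /\ ent x (n - 3) 0 = 0.
Proof.
move=> [_ leaf]; have lt_n1 : n.-1 < n by lia.
have := leaf _ lt_n1; rewrite leaf_wtE // (_ : (n.-1 == 0) = false) ?eqxx /side_wt /=; lia.
Qed.

Lemma inP_inner_edge x m : inP x -> m < n - 3 ->
  ent x m 1 + ent x m 3 = ent x m.+1 3 + ent x m.+1 5 /\
  ent x m 2 + ent x m 0 = ent x m.+1 0 + ent x m.+1 1.
Proof.
move=> Px lt_m; have [[_ edge] _] := Px.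
have := edge m lt_m; rewrite /side_wt /swap /= => -[e1 e2].
have lt_m2 : m < n - 2 by lia.
by have [_ h8 _ h4] := inP_vertex Px lt_m2; split; lia.
Qed.

(* Along the spine the entries [a] and [d] are differences of prefix sums of
   the rows: this is why an element of [P] is determined by its rows. *)
Lemma inP_spine x m : inP x -> m < n - 2 ->
  ent x m 0 + psum (row2 x) m.+1 = psum (row1 x) m /\
  ent x m 3 + psum (row3 x) m.+1 = psum (row2 x) m.
Proof.
move=> Px; elim: m => [|m IH] lt_m.
  have [d0 f0] := inP_first Px.
  by rewrite !psumS !psum0 /row1 /row2 /row3 /= ifF; [split; lia | lia].
have lt_m3 : m < n - 3 by lia.
have [IH1 IH2] := IH (ltnW lt_m); have [e1 e2] := inP_inner_edge Px lt_m3.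
rewrite (psumS (row2 x) m.+1) (psumS (row1 x) m) (psumS (row3 x) m.+1) psumS.
rewrite psumS row2S in IH1.
by rewrite !row1S !row2S row3S; [split; lia | lia].
Qed.

Lemma rowsK x : inP x -> of_rows (row1 x) (row2 x) (row3 x) = x.
Proof.
move=> Px; apply: assignP => m k lt_m lt_k; rewrite ent_of_rows // lt_m.
have [s1 s2] := inP_spine Px lt_m; have [h7 h8 h6 h4] := inP_vertex Px lt_m.
have f_m : row3 x m.+1 = ent x m 5 by rewrite row3S //; lia.
by do 9! [case: k lt_k => [|k] lt_k; first by rewrite /= ?row1S ?row2S ?f_m; lia].
Qed.

Lemma psum_rows_end x : inP x ->
  [/\ forall l, n - 3 <= l -> psum (row1 x) l = psum (row2 x) (n - 2),
      forall l, n - 2 <= l -> psum (row2 x) l = psum (row2 x) (n - 2) &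
      forall l, n - 1 <= l -> psum (row3 x) l = psum (row2 x) (n - 2)].
Proof.
move=> Px; have lt_n3 : n - 3 < n - 2 by lia.
have [c0 a0] := inP_last Px; have [s1 s2] := inP_spine Px lt_n3.
have En2 : n - 2 = (n - 3).+1 by lia.
split=> l le_l.
- transitivity (psum (row1 x) (n - 3)); last by rewrite En2 -s1 a0.
  apply: psum_stable => // -[//|y] lt_y; rewrite row1S.
  by case: (ltngtP y (n - 3)) => [|gt_y|->//]; [lia | rewrite ent_out; lia].
- by apply: psum_stable => // -[//|y] lt_y; rewrite row2S ent_out //; lia.
- transitivity (psum (row3 x) (n - 1)).
    by apply: psum_stable => // -[//|y] lt_y; rewrite row3S ?ent_out //; lia.
  rewrite En2 psumS row2S -s2 (_ : n - 1 = (n - 3).+2) ?psumS; last lia.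
  by rewrite (_ : (n - 3).+2 = n.-1) ?row3_last; lia.
Qed.

Lemma ballot_rows x : inP x -> ballot (row1 x) (row2 x) (row3 x).
Proof.
move=> Px; have [end1 end2 end3] := psum_rows_end Px.
split=> //.
- move=> [|l] le_l; first lia.
  by rewrite row1S row2S row3S ?ent_out //; lia.
- move=> l; have [lt_l|le_l] := ltnP l (n - 2); first by have [] := inP_spine Px lt_l; lia.
  by rewrite (end2 l.+1) ?(end1 l) //; lia.
- move=> l; have [lt_l|le_l] := ltnP l (n - 2); first by have [] := inP_spine Px lt_l; lia.
  by rewrite (end3 l.+1) ?(end2 l) //; lia.
- by rewrite (end1 n.-1) ?(end2 n.-1) ?(end3 n.-1) //; lia.
Qed.

Lemma ballot_last al be ga : ballot al be ga -> al n.-1 = 0 /\ be n.-1 = 0.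
Proof.
move=> [_ _ ab bg [tab tbg]]; have En : n.-1 = (n - 2).+1 by lia.
move: tab tbg (ab (n - 2)) (bg (n - 2)); rewrite En !psumS; lia.
Qed.

Lemma of_rowsK al be ga : ballot al be ga -> forall l,
  [/\ row1 (of_rows al be ga) l = al l, row2 (of_rows al be ga) l = be l &
      row3 (of_rows al be ga) l = ga l].
Proof.
move=> B; have [out [be0 ga0] ab bg [tab tbg]] := B; have [al_last be_last] := ballot_last B.
have vanish f l : (forall y, n <= y -> f y = 0) -> f n.-1 = 0 -> n - 2 <= l -> f l.+1 = 0.
  move=> f_out f_last le_l; have [->|ne_l] := eqVneq l.+1 n.-1; first exact: f_last.
  by apply: f_out; lia.
case=> [|l].
  rewrite /row1 /row2 /row3 /= !ent_of_rows // (_ : 0 < n - 2) /=; last lia.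
  by have := ab 0; rewrite psumS !psum0 be0 ga0; split; lia.
rewrite row1S row2S !ent_of_rows //.
have [lt_l|le_l] := ltnP l (n - 2).
  have ne_l : l.+1 != n.-1 by lia.
  by rewrite row3S // ent_of_rows // lt_l.
have al_l : al l.+1 = 0 by apply: vanish => // y /out[].
have be_l : be l.+1 = 0 by apply: vanish => // y /out[].
rewrite al_l be_l; split=> //.
have [El|ne_l] := eqVneq l.+1 n.-1; last first.
  have le_n : n <= l.+1 by lia.
  by have [_ _ ->] := out _ le_n; rewrite row3S // ent_of_rows // ltnNge le_l.
have En : n.-1 = (n - 3).+2 by lia.
rewrite El row3_last !ent_of_rows // (_ : n - 3 < n - 2) /=; last lia.
by move: tbg be_last (bg (n - 3)); rewrite En !psumS; lia.
Qed.

Lemma tri_lt (t : triple n) : [/\ tri1 t < tri2 t, tri2 t < tri3 t & tri3 t < n].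
Proof. by case/andP: (valP t) => lt12 lt23; split=> //; apply: ltn_ord. Qed.

Lemma triple_inj (s t : triple n) :
  tri1 s = tri1 t -> tri2 s = tri2 t -> tri3 s = tri3 t -> s = t.
Proof.
case: s t => [[[a b] c] ?] [[[a' b'] c'] ?]; rewrite /tri1 /tri2 /tri3 /=.
by move=> /val_inj Ea /val_inj Eb /val_inj Ec; apply: val_inj; rewrite /= Ea Eb Ec.
Qed.

Lemma exists_triple i j k : i < j -> j < k -> k < n ->
  exists t : triple n, [/\ tri1 t = i, tri2 t = j & tri3 t = k].
Proof.
move=> lt_ij lt_jk lt_kn; have lt_in : i < n by lia.
have lt_jn : j < n by lia.
have ijk : (Ordinal lt_in < Ordinal lt_jn < Ordinal lt_kn)%N by rewrite /= lt_ij lt_jk.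
by exists (exist _ (Ordinal lt_in, Ordinal lt_jn, Ordinal lt_kn) ijk).
Qed.

Definition wgen (t : triple n) : assign n :=
  of_rows (delta (tri1 t)) (delta (tri2 t)) (delta (tri3 t)).

Lemma ballot_delta (t : triple n) :
  ballot (delta (tri1 t)) (delta (tri2 t)) (delta (tri3 t)).
Proof.
have [lt12 lt23 lt3n] := tri_lt t; rewrite /ballot /leads; split.
- by move=> l le_l; rewrite /delta; split; apply/eqP; rewrite eqb0; apply/eqP; lia.
- by rewrite /delta; split; apply/eqP; rewrite eqb0; apply/eqP; lia.
- by move=> l; rewrite !psum_delta; case: leqP; case: leqP => //; lia.
- by move=> l; rewrite !psum_delta; case: leqP; case: leqP => //; lia.
- have le1 : tri1 t <= n.-1 by lia.
  have le2 : tri2 t <= n.-1 by lia.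
  have le3 : tri3 t <= n.-1 by lia.
  by rewrite !psum_delta le1 le2 le3.
Qed.

Lemma rows_wgen (t : triple n) l :
  [/\ row1 (wgen t) l = delta (tri1 t) l, row2 (wgen t) l = delta (tri2 t) l &
      row3 (wgen t) l = delta (tri3 t) l].
Proof. exact: of_rowsK (ballot_delta t) l. Qed.

Lemma inP_wgen (t : triple n) : inP (wgen t).
Proof. exact: inP_of_rows (ballot_delta t). Qed.

Lemma side_wtD x x' m s :
  side_wt (x + x')%R m s = ((side_wt x m s).1 + (side_wt x' m s).1,
                            (side_wt x m s).2 + (side_wt x' m s).2).
Proof.
by rewrite /side_wt !entD; case: ifP => _; [|case: ifP => _]; rewrite /=; congr pair; lia.
Qed.

Lemma inPD x x' : inP x -> inP x' -> inP (x + x')%R.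
Proof.
move=> [[bz edge] leaf] [[bz' edge'] leaf']; split; first split.
- move=> m lt_m; have := bz m lt_m; have := bz' m lt_m; rewrite /BZ_at !entD /=.
  by case=> b1 b2 b3 [b1' b2' b3']; split; lia.
- by move=> m lt_m; rewrite !side_wtD (edge m lt_m) (edge' m lt_m) /swap /=; congr pair; lia.
- by move=> l lt_l; have := leaf l lt_l; have := leaf' l lt_l; rewrite /leaf_wt side_wtD /=; lia.
Qed.

Lemma inP0 : inP (0 : assign n)%R.
Proof.
split; first split.
- by move=> m _; rewrite /BZ_at !ent0.
- by move=> m _; rewrite /side_wt !ent0.
- by move=> l _; rewrite /leaf_wt /side_wt !ent0; case: ifP => _ //; case: ifP.
Qed.

Lemma inP_sum (ts : seq (triple n)) : inP (\sum_(t <- ts) wgen t)%R.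
Proof.
elim: ts => [|t ts IH]; first by rewrite big_nil; exact: inP0.
by rewrite big_cons; exact: inPD (inP_wgen t) IH.
Qed.

Lemma rowsD x x' l :
  [/\ row1 (x + x')%R l = row1 x l + row1 x' l, row2 (x + x')%R l = row2 x l + row2 x' l &
      row3 (x + x')%R l = row3 x l + row3 x' l].
Proof. by rewrite /row1 /row2 /row3 !entD; split; case: ifP => //; try case: ifP => //; lia. Qed.

Lemma rows_sum (ts : seq (triple n)) l :
  [/\ row1 (\sum_(t <- ts) wgen t)%R l = count_mem l (map (@tri1 n) ts),
      row2 (\sum_(t <- ts) wgen t)%R l = count_mem l (map (@tri2 n) ts) &
      row3 (\sum_(t <- ts) wgen t)%R l = count_mem l (map (@tri3 n) ts)].
Proof.
elim: ts => [|t ts [IH1 IH2 IH3]].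
  by rewrite big_nil /row1 /row2 /row3 !ent0; split; case: ifP => //; case: ifP.
have [D1 D2 D3] := rowsD (wgen t) (\sum_(t <- ts) wgen t)%R l.
have [W1 W2 W3] := rows_wgen t l.
by rewrite big_cons D1 D2 D3 W1 W2 W3 IH1 IH2 IH3.
Qed.

Lemma rows_inj x x' : inP x -> inP x' ->
  (forall l, [/\ row1 x l = row1 x' l, row2 x l = row2 x' l & row3 x l = row3 x' l]) ->
  x = x'.
Proof.
move=> Px Px' E; rewrite -(rowsK Px) -(rowsK Px').
by apply: eq_of_rows => l; case: (E l).
Qed.

(* The column is formed by the first positive positions of the three rows. *)
Lemma ballot_column al be ga : ballot al be ga -> 0 < psum al n.-1 ->
  exists2 t : triple n, [/\ 0 < al (tri1 t), 0 < be (tri2 t) & 0 < ga (tri3 t)] &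
    ballot (fun y => al y - delta (tri1 t) y) (fun y => be y - delta (tri2 t) y)
           (fun y => ga y - delta (tri3 t) y).
Proof.
move=> [out [be0 ga0] ab bg [tab tbg]] pos_al.
have pos_be : 0 < psum be n.-1 by rewrite -tab.
have pos_ga : 0 < psum ga n.-1 by rewrite -tbg -tab.
have [i al_i i_min] := psum_gt0_first pos_al.
have [j be_j j_min] := psum_gt0_first pos_be.
have [k ga_k k_min] := psum_gt0_first pos_ga.
have lt_ij : i < j by apply: leads_first_lt ab be0 be_j i_min.
have lt_jk : j < k by apply: leads_first_lt bg ga0 ga_k j_min.
have lt_kn : k < n by rewrite ltnNge; apply/negP => /out[_ _]; lia.
have [t [Ei Ej Ek]] := exists_triple lt_ij lt_jk lt_kn.
exists t; rewrite Ei Ej Ek => //; split.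
- by move=> l /out[-> -> ->].
- by rewrite /delta be0 ga0.
- exact: leads_subdelta.
- exact: leads_subdelta.
- have [le_i le_j le_k] : [/\ i <= n.-1, j <= n.-1 & k <= n.-1] by split; lia.
  by rewrite !psum_subdelta // le_i le_j le_k; lia.
Qed.

Lemma ballot_decomp al be ga : ballot al be ga ->
  exists ts : seq (triple n), forall l,
    [/\ al l = count_mem l (map (@tri1 n) ts), be l = count_mem l (map (@tri2 n) ts) &
        ga l = count_mem l (map (@tri3 n) ts)].
Proof.
move Ek: (psum al n.-1) => k; elim: k al be ga Ek => [|k IH] al be ga Ek B.
  exists [::] => l /=; have [out _ _ _ [tab tbg]] := B.
  case: (leqP n l) => [/out[-> -> ->] //|lt_l].
  by split; apply: (proj1 (psum_eq0P _ n.-1)); lia.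
have pos : 0 < psum al n.-1 by rewrite Ek.
have [t [al_t be_t ga_t] B'] := ballot_column B pos.
have [ts Ets] : exists ts, forall l, [/\ al l - delta (tri1 t) l = count_mem l (map (@tri1 n) ts),
    be l - delta (tri2 t) l = count_mem l (map (@tri2 n) ts) &
    ga l - delta (tri3 t) l = count_mem l (map (@tri3 n) ts)].
  apply: IH B'; have [lt12 lt23 lt3n] := tri_lt t; have le1 : tri1 t <= n.-1 by lia.
  by rewrite psum_subdelta // Ek le1 subn1.
exists (t :: ts) => l /=; have [<- <- <-] := Ets l; rewrite /delta.
by split; case: eqP => [<-|]; lia.
Qed.

Lemma inP_decomp x : inP x -> exists ts : seq (triple n), x = (\sum_(t <- ts) wgen t)%R.
Proof.
move=> Px; have [ts E] := ballot_decomp (ballot_rows Px).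
exists ts; apply: rows_inj => // [|l]; first exact: inP_sum.
by have [-> -> ->] := rows_sum ts l; have [<- <- <-] := E l.
Qed.

Lemma psum_count_size (ts : seq (triple n)) :
  psum (fun l => count_mem l (map (@tri1 n) ts)) n.-1 = size ts.
Proof.
elim: ts => [|t ts IH] /=; first by apply/psum_eq0P.
rewrite (@eq_psum _ (fun y => delta (tri1 t) y + count_mem y (map (@tri1 n) ts))) //.
have [lt12 lt23 lt3n] := tri_lt t; have le1 : tri1 t <= n.-1 by lia.
by rewrite psumD psum_delta IH le1.
Qed.

Lemma size_wgen_sum (ts us : seq (triple n)) :
  (\sum_(t <- ts) wgen t)%R = (\sum_(t <- us) wgen t)%R -> size ts = size us.
Proof.
move=> E; rewrite -!psum_count_size; apply: eq_psum => l.
by have [<- _ _] := rows_sum ts l; have [<- _ _] := rows_sum us l; rewrite E.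
Qed.

Lemma wgen_neq0 (t : triple n) : wgen t <> 0%R.
Proof.
move=> E; have [W1 _ _] := rows_wgen t (tri1 t); move: W1.
by rewrite E /delta eqxx /row1 !ent0; case: ifP.
Qed.

Lemma min_gen_wgen (t : triple n) : min_gen (wgen t).
Proof.
split=> [||u v Pu Pv E]; [exact: inP_wgen | exact: wgen_neq0 |].
have [us Eu] := inP_decomp Pu; have [vs Ev] := inP_decomp Pv; subst u v.
have := size_wgen_sum (ts := [:: t]) (us := us ++ vs).
rewrite big_seq1 big_cat size_cat => /(_ E) /= sz; clear E.
case: us {Pu} sz => [|u us] sz; first by left; rewrite big_nil.
by case: vs {Pv} sz => [|v vs] /= sz; [right; rewrite big_nil | lia].
Qed.

Lemma min_gen_wgenP (w : assign n) : min_gen w -> exists t, w = wgen t.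
Proof.
move=> [Pw nz irr]; have [[|t ts] E] := inP_decomp Pw; first by rewrite E big_nil in nz.
rewrite big_cons in E; exists t.
case: (irr _ _ (inP_wgen t) (inP_sum ts) E) => [/wgen_neq0 //|ts0].
by rewrite E ts0 addr0.
Qed.

Lemma leaf_wt_rows x l : inP x -> l < n -> leaf_wt x l = (row1 x l + row2 x l + row3 x l, 0).
Proof.
move=> Px lt_l; rewrite leaf_wtE //.
have [->|l0] := eqVneq l 0.
  by have [d0 f0] := inP_first Px; rewrite /side_wt /= /row1 /row2 /row3 /=; congr pair; lia.
have [->|ln] := eqVneq l n.-1.
  have lt_n3 : n - 3 < n - 2 by lia.
  have [c0 a0] := inP_last Px; have [h7 h8 h6 h4] := inP_vertex Px lt_n3.
  have n1 : (n.-1 == 0) = false by lia.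
  rewrite /side_wt /= /row1 /row2 /row3 eqxx n1 !(@ent_out _ n.-2) //; try lia.
  by congr pair; lia.
have lt_l2 : l.-1 < n - 2 by lia.
have [h7 h8 h6 h4] := inP_vertex Px lt_l2.
by rewrite /side_wt /= /row1 /row2 /row3 (negbTE l0) (negbTE ln); congr pair; lia.
Qed.

Lemma leaf_wt_wgen (t : triple n) l : l < n ->
  leaf_wt (wgen t) l = ((tri1 t == l) + (tri2 t == l) + (tri3 t == l), 0).
Proof.
by move=> lt_l; rewrite leaf_wt_rows //; [have [-> -> ->] := rows_wgen t l | exact: inP_wgen].
Qed.

Lemma inner_wt_wgen (t : triple n) m : m < n - 3 ->
  inner_wt (wgen t) m = ((tri2 t == m.+1) + ((tri2 t <= m) - (tri3 t <= m.+1)),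
                         (tri1 t == m.+1) + ((tri1 t <= m) - (tri2 t <= m.+1))).
Proof.
move=> lt_m; have lt_m2 : m < n - 2 by lia.
rewrite /inner_wt /side_wt /wgen /= !ent_of_rows // lt_m2 /= !psum_delta /delta.
by congr pair; lia.
Qed.

Lemma leaf_vert_leq a m : a < n -> m < n - 3 -> (leaf_vert n a <= m) = (a <= m.+1).
Proof. by move=> lt_a lt_m; rewrite /leaf_vert; case: ifP => h1; [|case: ifP => h2]; lia. Qed.

Lemma supp_span_wgen (t : triple n) : supp_span (wgen t) t.
Proof.
have [lt12 lt23 lt3n] := tri_lt t; split=> [l lt_l|m lt_m].
  by rewrite leaf_wt_wgen // xpair_eqE; lia.
by rewrite inner_wt_wgen // xpair_eqE /separates !leaf_vert_leq //; lia.
Qed.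

(* Already the leaves of the support determine the triple. *)
Lemma supp_span_wgen_inj (s t : triple n) : supp_span (wgen s) t -> s = t.
Proof.
move=> [leaf _]; have [s12 s23 s3n] := tri_lt s; have [t12 t23 t3n] := tri_lt t.
suff [E1 E2 E3] : [:: tri1 s; tri2 s; tri3 s] = [:: tri1 t; tri2 t; tri3 t].
  exact: triple_inj.
apply: (irr_sorted_eq ltn_trans ltnn); rewrite /= ?s12 ?s23 ?t12 ?t23 // => l.
rewrite !inE; have [lt_l|le_l] := ltnP l n; last first.
  by apply/idP/idP => /or3P[] /eqP; lia.
rewrite -leaf // leaf_wt_wgen // xpair_eqE andbT !(eq_sym l).
by case: (tri1 s == l); case: (tri2 s == l); case: (tri3 s == l).
Qed.

Definition ord_min (a b : 'I_n) : 'I_n := Ordinal (leq_ltn_trans (geq_minl a b) (ltn_ord a)).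

Lemma ord_max_subproof (a b : 'I_n) : maxn a b < n.
Proof. by rewrite gtn_max !ltn_ord. Qed.

Definition ord_max (a b : 'I_n) : 'I_n := Ordinal (ord_max_subproof a b).

Lemma tmeet_subproof (t u : triple n) :
  (ord_min (val t).1.1 (val u).1.1 < ord_min (val t).1.2 (val u).1.2 <
   ord_min (val t).2 (val u).2)%N.
Proof. by have [] := tri_lt t; have [] := tri_lt u; rewrite /tri1 /tri2 /tri3 /=; lia. Qed.

Lemma tjoin_subproof (t u : triple n) :
  (ord_max (val t).1.1 (val u).1.1 < ord_max (val t).1.2 (val u).1.2 <
   ord_max (val t).2 (val u).2)%N.
Proof. by have [] := tri_lt t; have [] := tri_lt u; rewrite /tri1 /tri2 /tri3 /=; lia. Qed.

Definition tmeet (t u : triple n) : triple n :=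
  exist _ (ord_min (val t).1.1 (val u).1.1, ord_min (val t).1.2 (val u).1.2,
           ord_min (val t).2 (val u).2) (tmeet_subproof t u).

Definition tjoin (t u : triple n) : triple n :=
  exist _ (ord_max (val t).1.1 (val u).1.1, ord_max (val t).1.2 (val u).1.2,
           ord_max (val t).2 (val u).2) (tjoin_subproof t u).

Lemma wgen_hibi (t u : triple n) :
  (wgen t + wgen u = wgen (tmeet t u) + wgen (tjoin t u))%R.
Proof.
have pairE s s' : (wgen s + wgen s' = \sum_(v <- [:: s; s']) wgen v)%R.
  by rewrite big_cons big_seq1.
rewrite !pairE; apply: rows_inj; [exact: inP_sum | exact: inP_sum | move=> l].
have [-> -> ->] := rows_sum [:: t; u] l.
have [-> -> ->] := rows_sum [:: tmeet t u; tjoin t u] l.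
by rewrite /= /tri1 /tri2 /tri3 /=; split; lia.
Qed.

Lemma assign_addrI (x y y' : assign n) : (x + y = x + y')%R -> y = y'.
Proof. by move=> /ffunP E; apply/ffunP => p; have := E p; rewrite !ffunE => /addnI. Qed.

Lemma perm_wgen_sum (ts us : seq (triple n)) :
  (\sum_(t <- ts) wgen t = \sum_(t <- us) wgen t)%R ->
  [/\ perm_eq (map (@tri1 n) ts) (map (@tri1 n) us),
      perm_eq (map (@tri2 n) ts) (map (@tri2 n) us) &
      perm_eq (map (@tri3 n) ts) (map (@tri3 n) us)].
Proof.
move=> E; split; apply/allP => l _; apply/eqP; have [R1 R2 R3] := rows_sum ts l;
  by have [S1 S2 S3] := rows_sum us l; rewrite E in R1 R2 R3; congruence.
Qed.

Lemma foldr_tmeet_min (f : triple n -> nat) :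
  (forall a b, f (tmeet a b) = minn (f a) (f b)) -> forall t r,
  f (foldr tmeet t r) \in map f (t :: r) /\ all (leq (f (foldr tmeet t r))) (map f (t :: r)).
Proof.
move=> fM t; elim=> [|u r [mem_m all_m]] /=; first by rewrite inE eqxx leqnn.
move: mem_m all_m; rewrite fM !inE /= => /orP[/eqP->|mem_m] /andP[le_t all_r].
  split; first by case: leqP => _; rewrite eqxx ?orbT.
  by rewrite geq_minl geq_minr (sub_all _ all_r) // => y; apply/leq_trans/geq_minr.
split; first by case: leqP => _; rewrite ?eqxx ?mem_m ?orbT.
rewrite geq_minl (leq_trans (geq_minr _ _) le_t) (sub_all _ all_r) // => y.
exact/leq_trans/geq_minr.
Qed.

(* The meet of all the columns of a decomposition depends only on the sum. *)
Lemma foldr_tmeet_perm (f : triple n -> nat) :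
  (forall a b, f (tmeet a b) = minn (f a) (f b)) -> forall t r u q,
  perm_eq (map f (t :: r)) (map f (u :: q)) -> f (foldr tmeet t r) = f (foldr tmeet u q).
Proof.
move=> fM t r u q pe; have [mem1 all1] := foldr_tmeet_min fM t r.
have [mem2 all2] := foldr_tmeet_min fM u q.
rewrite (perm_mem pe) in mem1; rewrite (perm_all _ pe) in all1.
by apply/eqP; rewrite eqn_leq (allP all1 _ mem2) (allP all2 _ mem1).
Qed.

Local Open Scope ring_scope.

Definition wprod (ts : seq (triple n)) : {mpoly algC[nvars n]} := \prod_(t <- ts) var t.

Lemma J3n_hibi (t u : triple n) : J3n (var t * var u - var (tmeet t u) * var (tjoin t u)).
Proof. by apply: ideal_gen_mem; exists t, u, (tmeet t u), (tjoin t u). Qed.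

(* Repeated Hibi exchanges move the meet of all columns to the front. *)
Lemma straighten (t : triple n) (r : seq (triple n)) :
  exists r', [/\ J3n (wprod (t :: r) - wprod (foldr tmeet t r :: r')),
    \sum_(s <- t :: r) wgen s = \sum_(s <- foldr tmeet t r :: r') wgen s & size r' = size r].
Proof.
elim: r => [|u r [r' [J_r' S_r' size_r']]].
  by exists [::]; rewrite subrr; split=> //; apply: ideal_gen0.
set m := foldr tmeet t r in J_r' S_r' *.
exists (tjoin u m :: r'); split=> /=; last by rewrite size_r'.
  move: J_r'; rewrite /wprod !big_cons => J_r'.
  rewrite [_ - _](_ : _ = var u * (var t * wprod r - var m * wprod r') +
    (var u * var m - var (tmeet u m) * var (tjoin u m)) * wprod r'); last by rewrite /wprod; ring.
  by apply: ideal_genD; [apply: ideal_genMl | rewrite mulrC; apply/ideal_genMl/J3n_hibi].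
by rewrite !big_cons in S_r' *; rewrite addrCA S_r' addrA wgen_hibi addrA.
Qed.

Lemma J3n_wprod (ts us : seq (triple n)) :
  \sum_(t <- ts) wgen t = \sum_(t <- us) wgen t -> J3n (wprod ts - wprod us).
Proof.
move Ek: (size ts) => k; elim: k ts us Ek => [|k IH] [|t r] [|u q] //= Ek E;
  try by have := size_wgen_sum E.
- by rewrite subrr; apply: ideal_gen0.
have [P1 P2 P3] := perm_wgen_sum E.
have Em : foldr tmeet t r = foldr tmeet u q.
  by apply: triple_inj; apply: foldr_tmeet_perm.
have [r' [Jr Sr size_r]] := straighten t r; have [q' [Jq Sq _]] := straighten u q.
rewrite -Em in Jq Sq; set m := foldr tmeet t r in Jr Sr Jq Sq.
have : \sum_(s <- m :: r') wgen s = \sum_(s <- m :: q') wgen s by rewrite -Sr E Sq.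
rewrite !big_cons => /assign_addrI E'.
rewrite [_ - _](_ : _ = (wprod (t :: r) - wprod (m :: r')) + var m * (wprod r' - wprod q') -
  (wprod (u :: q) - wprod (m :: q'))); last by rewrite /wprod !big_cons; ring.
by apply: ideal_genB => //; apply: ideal_genD => //; apply/ideal_genMl/IH => //; lia.
Qed.

Lemma monomD (x y : assign n) : monom (x + y) = (monom x + monom y)%MM.
Proof. by apply/mnmP => i; rewrite mnmDE !mnmE ffunE. Qed.

Lemma monom0 : monom (0 : assign n) = 0%MM.
Proof. by apply/mnmP => i; rewrite mnm0E mnmE ffunE. Qed.

Lemma monom_inj : injective (@monom n).
Proof.
by move=> x y /mnmP E; apply/ffunP => p; have := E (enum_rank p); rewrite !mnmE enum_rankK.
Qed.

Definition mtriples (m : 'X_{1..nvars n}) : seq (triple n) :=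
  flatten [seq nseq (m i) (enum_val i) | i <- index_enum 'I_(nvars n)].

Lemma X_mtriples m : 'X_[m] = wprod (mtriples m).
Proof.
rewrite mpolyXE_id /wprod /mtriples big_flatten big_map; apply: eq_bigr => i _.
by rewrite big_nseq /var enum_valK; elim: (m i) => [|k /= <-]; rewrite ?expr0 ?exprS.
Qed.

Section Kernel.

Variable wf : triple n -> assign n.
Hypothesis wfE : forall t, wf t = wgen t.

Lemma phi_var t : phi wf (var t) = 'X_[monom (wgen t)].
Proof. by rewrite /phi /var comp_mpolyXU -tnth_nth tnth_mktuple enum_rankK wfE. Qed.

Lemma phi_wprod ts : phi wf (wprod ts) = 'X_[monom (\sum_(t <- ts) wgen t)].
Proof.
elim: ts => [|t ts IH]; first by rewrite /wprod !big_nil rmorph1 monom0 mpolyX0.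
by rewrite /wprod !big_cons rmorphM /= -/(wprod ts) IH phi_var -mpolyXD -monomD.
Qed.

Lemma kerI_J3n p : kerI wf p <-> J3n p.
Proof.
split=> [ker_p | [s [Ss ->]]].
  apply: (ideal_gen_kernel (phi := phi wf)
                           (g := fun m => monom (\sum_(t <- mtriples m) wgen t))).
  - by move=> m /=; rewrite X_mtriples phi_wprod.
  - by move=> m m' /monom_inj E; rewrite !X_mtriples; apply: J3n_wprod.
  - exact: ker_p.
rewrite /kerI raddf_sum; apply: big1_seq => q /andP[_ /Ss].
move=> [t [u [v [x [[v1 v2 v3] [[x1 x2 x3] ->]]]]]].
have -> : v = tmeet t u by apply: triple_inj.
have -> : x = tjoin t u by apply: triple_inj.
by rewrite /= rmorphM rmorphB !rmorphM /= !phi_var -!mpolyXD -!monomD wgen_hibi subrr mulr0.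
Qed.

End Kernel.

End Caterpillar.

Theorem mainTheorem6 (n : nat) (hn : (3 <= n)%N) :
  (forall t : triple n,
     exists w : assign n,
       [/\ min_gen w, supp_span w t &
           forall w', min_gen w' -> supp_span w' t -> w' = w]) /\
  (forall w : assign n, min_gen w -> exists t : triple n, supp_span w t) /\
  (forall wf : triple n -> assign n,
     (forall t, min_gen (wf t) /\ supp_span (wf t) t) ->
     forall p : {mpoly algC[nvars n]}, kerI wf p <-> J3n p).
Proof.
have gen_uniq (t : triple n) (w : assign n) : min_gen w -> supp_span w t -> w = wgen t.
  move=> Mw; have [s ->] := min_gen_wgenP hn Mw.
  by move=> Sw; rewrite (supp_span_wgen_inj hn Sw).
split; [|split].
- move=> t; exists (wgen t).
  by split; [exact: min_gen_wgen | exact: supp_span_wgen | exact: gen_uniq].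
- move=> w Mw; have [t ->] := min_gen_wgenP hn Mw.
  by exists t; apply: supp_span_wgen.
- move=> wf wfP; apply: (kerI_J3n hn) => t; have [] := wfP t; exact: gen_uniq.
Qed.
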